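(* Suppose $y$ is the peak blue entry of a $321$-containing avoider $p$. Then (i) $p\,\backslash\,\{y\}$ is again an avoider, (ii) the blue entries of $p$ other than $y$ become the blue entries of $p\,\backslash\,\{y\}$, and (iii) $y$ is in the peak-insertion set of $p\,\backslash\,\{y\}$.
   Context: Permutations are standard permutations written in one-line form. A permutation on $[n]$ is indecomposable if there is no $k$ with $1\le k<n$ such that its first $k$ entries are exactly $\{1,\dots,k\}$ (the empty permutation is not indecomposable). An ''avoider'' means an indecomposable permutation avoiding both patterns $3241$ and $4321$. A blue (key-2) entry of an avoider is an entry that serves as the ''2'' in a $321$ pattern or in a $4312$ pattern. For a $321$-containing avoider, let $a$ be the last (rightmost) entry serving as the ''1'' of a $321$ pattern; the peak blue entry is the larger of $a$ and its immediate predecessor. Deleting an entry $y$ from a permutation $p$ on $[n]$, written $p\,\backslash\,\{y\}$, means erasing $y$ and subtracting $1$ from each entry $>y$. LRMax means left-to-right maximum. To a $321$-containing permutation $p$ on $[n]$ associate the triple $(a,b,c)$: $a$ is the last ''1'' of a $321$ in $p$, $b$ is the rightmost entry to the left of $a$ that exceeds $a$, and $c$ is the first non-LRMax entry after $a$ ($c=\infty$ if there is none). Its peak-insertion set is $[a+1,b+1]\cup[c+1,n]$, where $[c+1,n]=\emptyset$ if $c=\infty$. For a $321$-avoiding permutation on $[n]$, set $c=1$ and define its peak-insertion set to be $[2,n]$. *)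

(* Permutations are sequences of nats in one-line
   form with values 1..n; positions are 0-based indices into the sequence. *)
From mathcomp Require Import all_boot.
Set Implicit Arguments. Unset Strict Implicit. Unset Printing Implicit Defensive.

Definition is_perm (p : seq nat) : Prop := perm_eq p (iota 1 (size p)).

Definition indecomposable (p : seq nat) : Prop :=
  0 < size p /\ forall k, 1 <= k < size p -> ~ perm_eq (take k p) (iota 1 k).

Definition order_iso (s q : seq nat) : Prop :=
  size s = size q /\
  forall i j, i < size q -> j < size q ->
    (nth 0 s i < nth 0 s j) = (nth 0 q i < nth 0 q j).

Definition occurrence (p q : seq nat) (idx : seq nat) : Prop :=
  sorted ltn idx /\ all (fun i => i < size p) idx /\
  order_iso (map (nth 0 p) idx) q.

Definition contains (p q : seq nat) : Prop := exists idx, occurrence p q idx.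

Definition serves_at (p q : seq nat) (r : nat) (i : nat) : Prop :=
  exists idx, occurrence p q idx /\ nth 0 idx (index r q) = i.

Definition serves_as (p q : seq nat) (r : nat) (y : nat) : Prop :=
  exists i, serves_at p q r i /\ nth 0 p i = y.

Definition avoider (p : seq nat) : Prop :=
  [/\ is_perm p, indecomposable p,
      ~ contains p [:: 3; 2; 4; 1] & ~ contains p [:: 4; 3; 2; 1]].

Definition blue (p : seq nat) (y : nat) : Prop :=
  serves_as p [:: 3; 2; 1] 2 y \/ serves_as p [:: 4; 3; 1; 2] 2 y.

Definition last_one_pos (p : seq nat) (i : nat) : Prop :=
  serves_at p [:: 3; 2; 1] 1 i /\
  forall j, i < j -> ~ serves_at p [:: 3; 2; 1] 1 j.

Definition peak_blue (p : seq nat) (y : nat) : Prop :=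
  exists i, last_one_pos p i /\ y = maxn (nth 0 p i) (nth 0 p i.-1).

Definition relabel (y x : nat) : nat := if y < x then x.-1 else x.
Definition delete (p : seq nat) (y : nat) : seq nat :=
  [seq relabel y x | x <- p & x != y].

Definition rightmost_greater_pos (p : seq nat) (i j : nat) : Prop :=
  j < i /\ nth 0 p i < nth 0 p j /\
  forall k, j < k < i -> ~ (nth 0 p i < nth 0 p k).

Definition is_LRMax (p : seq nat) (k : nat) : Prop :=
  forall j, j < k -> nth 0 p j < nth 0 p k.

Definition first_nonLRMax_after (p : seq nat) (i k : nat) : Prop :=
  i < k < size p /\ ~ is_LRMax p k /\
  forall m, i < m < k -> is_LRMax p m.

Definition in_peak_insertion_set (q : seq nat) (y : nat) : Prop :=
  (contains q [:: 3; 2; 1] /\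
   exists i j, last_one_pos q i /\ rightmost_greater_pos q i j /\
     ((nth 0 q i).+1 <= y <= (nth 0 q j).+1 \/
      exists k, first_nonLRMax_after q i k /\
                (nth 0 q k).+1 <= y <= size q))
  \/ (~ contains q [:: 3; 2; 1] /\ 2 <= y <= size q).

From mathcomp Require Import all_boot zify.
From Stdlib Require Import Classical.
Set Implicit Arguments. Unset Strict Implicit. Unset Printing Implicit Defensive.

(* Let a = p_i be the last "1" of a 321 and y the larger of a and p_(i-1).  Then y
   has an adjacent smaller neighbour y' (the other one of p_(i-1), p_i) and a larger
   entry c to its left: the "3" of that 321, which exceeds p_(i-1) by 3241-avoidance.
   Patterns of p \ {y} lift to p, so avoidance and blueness in p \ {y} come from p.
   Conversely a 321 or 4312 witnessing that x <> y is blue either avoids y, or uses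
   y as its smallest letter and y' can take its place, or would contain a 321 whose
   "1" lies right of a.  A prefix {1..k} of p \ {y} would force the first k entries
   of p to be {1..k+1} minus y, which misses y' < y, or the first k+1 entries of p to
   be {1..k+1}, contradicting indecomposability of p or the presence of c > y among
   them.  Finally the last "1" of a 321 in p \ {y} sits at position i-1 or before,
   and 3241- and 4321-avoidance pin down where y falls in the peak-insertion set. *)

Lemma size_occurrence p q idx : occurrence p q idx -> size idx = size q.
Proof. by case=> _ [_ [+ _]]; rewrite size_map. Qed.

Lemma occurrence3P p q i j k : occurrence p q [:: i; j; k] <->
  [/\ i < j, j < k, k < size p & order_iso [:: nth 0 p i; nth 0 p j; nth 0 p k] q].
Proof.
rewrite /occurrence /=; split.
  by case=> /and3P[ij jk _] [/and4P[_ _ kp _] iso].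
by case=> ij jk kp iso; rewrite ij jk kp /=; do !split=> //; apply/and3P; split; lia.
Qed.

Lemma occurrence4P p q i j k l : occurrence p q [:: i; j; k; l] <->
  [/\ i < j, j < k, k < l /\ l < size p &
      order_iso [:: nth 0 p i; nth 0 p j; nth 0 p k; nth 0 p l] q].
Proof.
rewrite /occurrence /=; split.
  by case=> /and4P[ij jk kl _] [/and5P[_ _ _ lp _] iso].
case=> ij jk [kl lp] iso; rewrite ij jk kl lp /=.
by do !split=> //; apply/and4P; split; lia.
Qed.

Lemma size3_seq (s : seq nat) : size s = 3 -> exists i j k, s = [:: i; j; k].
Proof. by case: s => [|i [|j [|k [|]]]] //= _; exists i, j, k. Qed.

Lemma size4_seq (s : seq nat) : size s = 4 -> exists i j k l, s = [:: i; j; k; l].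
Proof. by case: s => [|i [|j [|k [|l [|]]]]] //= _; exists i, j, k, l. Qed.

Lemma serves_at_lt p q r k : r \in q -> serves_at p q r k -> k < size p.
Proof.
move=> rq [idx [occ <-]]; case: (occ) => _ [/allP idx_lt _].
by apply: idx_lt; rewrite mem_nth // (size_occurrence occ) index_mem.
Qed.

Ltac solve_order_iso :=
  split; [done | move=> [|[|[|[|?]]]] [|[|[|[|?]]]] //= _ _; lia].

Lemma order_iso321P a b c :
  order_iso [:: a; b; c] [:: 3; 2; 1] <-> c < b /\ b < a.
Proof.
split=> [[_ iso] | [? ?]]; last by solve_order_iso.
by split; [move: (iso 2 1) | move: (iso 1 0)] => /= ->.
Qed.

Lemma order_iso4312P a b c d :
  order_iso [:: a; b; c; d] [:: 4; 3; 1; 2] <-> [/\ c < d, d < b & b < a].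
Proof.
split=> [[_ iso] | [? ? ?]]; last by solve_order_iso.
by split; [move: (iso 2 3) | move: (iso 3 1) | move: (iso 1 0)] => /= ->.
Qed.

Lemma order_iso3241P a b c d :
  order_iso [:: a; b; c; d] [:: 3; 2; 4; 1] <-> [/\ d < b, b < a & a < c].
Proof.
split=> [[_ iso] | [? ? ?]]; last by solve_order_iso.
by split; [move: (iso 3 1) | move: (iso 1 0) | move: (iso 0 2)] => /= ->.
Qed.

Lemma order_iso4321P a b c d :
  order_iso [:: a; b; c; d] [:: 4; 3; 2; 1] <-> [/\ d < c, c < b & b < a].
Proof.
split=> [[_ iso] | [? ? ?]]; last by solve_order_iso.
by split; [move: (iso 3 2) | move: (iso 2 1) | move: (iso 1 0)] => /= ->.
Qed.

Section PatternsByPositions.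

Variable p : seq nat.
Local Notation P := (nth 0 p).

Lemma contains321P : contains p [:: 3; 2; 1] <->
  exists i j k, [/\ i < j, j < k, k < size p, P k < P j & P j < P i].
Proof.
split=> [[idx occ] | [i [j [k [ij jk kp ? ?]]]]].
  have [i [j [k eidx]]] := size3_seq (size_occurrence occ); subst idx.
  by case/occurrence3P: occ => ij jk kp /order_iso321P[? ?]; exists i, j, k.
by exists [:: i; j; k]; apply/occurrence3P; split=> //; apply/order_iso321P.
Qed.

Lemma serves_at321_1P k : serves_at p [:: 3; 2; 1] 1 k <->
  exists i j, [/\ i < j, j < k, k < size p, P k < P j & P j < P i].
Proof.
split=> [[idx [occ e]] | [i [j [ij jk kp ? ?]]]].
  have [i [j [k' eidx]]] := size3_seq (size_occurrence occ); subst idx k.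
  by case/occurrence3P: occ => ij jk kp /order_iso321P[? ?]; exists i, j.
by exists [:: i; j; k]; split=> //; apply/occurrence3P; split=> //; apply/order_iso321P.
Qed.

Lemma serves_at321_2P j : serves_at p [:: 3; 2; 1] 2 j <->
  exists i k, [/\ i < j, j < k, k < size p, P k < P j & P j < P i].
Proof.
split=> [[idx [occ e]] | [i [k [ij jk kp ? ?]]]].
  have [i [j' [k eidx]]] := size3_seq (size_occurrence occ); subst idx j.
  by case/occurrence3P: occ => ij jk kp /order_iso321P[? ?]; exists i, k.
by exists [:: i; j; k]; split=> //; apply/occurrence3P; split=> //; apply/order_iso321P.
Qed.

Lemma serves_at4312_2P l : serves_at p [:: 4; 3; 1; 2] 2 l <->
  exists i j k, [/\ i < j, j < k, k < l /\ l < size p, P k < P l & P l < P j /\ P j < P i].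
Proof.
split=> [[idx [occ e]] | [i [j [k [ij jk [kl lp] ? [? ?]]]]]].
  have [i [j [k [l' eidx]]]] := size4_seq (size_occurrence occ); subst idx l.
  by case/occurrence4P: occ => ij jk kl /order_iso4312P[? ? ?]; exists i, j, k.
exists [:: i; j; k; l]; split=> //.
by apply/occurrence4P; split=> //; apply/order_iso4312P.
Qed.

Lemma contains3241P : contains p [:: 3; 2; 4; 1] <->
  exists i j k l, [/\ i < j, j < k, k < l /\ l < size p, P l < P j & P j < P i /\ P i < P k].
Proof.
split=> [[idx occ] | [i [j [k [l [ij jk [kl lp] ? [? ?]]]]]]].
  have [i [j [k [l eidx]]]] := size4_seq (size_occurrence occ); subst idx.
  by case/occurrence4P: occ => ij jk kl /order_iso3241P[? ? ?]; exists i, j, k, l.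
by exists [:: i; j; k; l]; apply/occurrence4P; split=> //; apply/order_iso3241P.
Qed.

Lemma contains4321P : contains p [:: 4; 3; 2; 1] <->
  exists i j k l, [/\ i < j, j < k, k < l /\ l < size p, P l < P k & P k < P j /\ P j < P i].
Proof.
split=> [[idx occ] | [i [j [k [l [ij jk [kl lp] ? [? ?]]]]]]].
  have [i [j [k [l eidx]]]] := size4_seq (size_occurrence occ); subst idx.
  by case/occurrence4P: occ => ij jk kl /order_iso4321P[? ? ?]; exists i, j, k, l.
by exists [:: i; j; k; l]; apply/occurrence4P; split=> //; apply/order_iso4321P.
Qed.

End PatternsByPositions.

Lemma order_iso_map f s q : {in s &, {mono f : x x' / x < x'}} ->
  order_iso (map f s) q <-> order_iso s q.
Proof.
rewrite /order_iso size_map => f_mono.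
split=> -[sz iso]; split=> // i j iq jq; rewrite -iso // !(nth_map 0) ?sz //.
  by rewrite f_mono // mem_nth ?sz.
by rewrite f_mono // mem_nth ?sz.
Qed.

Lemma relabel_mono y : {in predC1 y &, {mono relabel y : x x' / x < x'}}.
Proof. by move=> x x' /eqP ? /eqP ?; rewrite /relabel; case: ifP; case: ifP; lia. Qed.

Lemma relabel_inj y : {in predC1 y &, injective (relabel y)}.
Proof. by move=> x x' /eqP ? /eqP ?; rewrite /relabel; case: ifP; case: ifP; lia. Qed.

Section DeletionAtPosition.

Variables (p : seq nat) (t : nat).
Hypotheses (p_uniq : uniq p) (t_lt : t < size p).
Local Notation P := (nth 0 p).
Local Notation n := (size p).
Local Notation y := (nth 0 p t).
Local Notation q := (delete p (nth 0 p t)).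

(* Position k of q is position [bump t k] of p; position k <> t of p is position
   [unbump t k] of q. *)

Lemma delete_at : q = map (relabel y) (take t p ++ drop t.+1 p).
Proof.
rewrite /delete; set z := nth 0 p t.
have def_p : p = take t p ++ z :: drop t.+1 p by rewrite -drop_nth // cat_take_drop.
move: p_uniq; rewrite [in X in X -> _]def_p cat_uniq /= => /and3P[_ /norP[zNl _] /andP[zNr _]].
rewrite [in filter _ _]def_p filter_cat /= eqxx /=; congr (map _ (_ ++ _)).
  by apply/all_filterP/allP=> x xl; apply: contraNneq zNl => <-.
by apply/all_filterP/allP=> x xr; apply: contraNneq zNr => <-.
Qed.

Lemma size_delete : size q = n.-1.
Proof. by rewrite delete_at size_map size_cat size_take size_drop t_lt; lia. Qed.

Lemma nth_delete k : k < n.-1 -> nth 0 q k = relabel y (P (bump t k)).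
Proof.
move=> kq; rewrite delete_at (nth_map 0); last by rewrite size_cat size_take size_drop t_lt; lia.
rewrite nth_cat size_take t_lt /bump; case: ltnP => kt; first by rewrite nth_take // add0n.
by rewrite nth_drop; congr (relabel _ (nth _ _ _)); lia.
Qed.

Lemma nth_delete_unbump k : k < n -> k != t -> nth 0 q (unbump t k) = relabel y (P k).
Proof.
move=> kp kt; rewrite nth_delete ?unbumpK //.
by move: kt; rewrite /unbump => /eqP; lia.
Qed.

Lemma nth_neq_at k : k < n -> k != t -> P k != y.
Proof. by move=> kp; apply: contra => /eqP e; rewrite -(nth_uniq 0 kp t_lt p_uniq) e. Qed.

Lemma occurrence_delete pat idx :
  occurrence q pat idx -> occurrence p pat (map (bump t) idx).
Proof.
case=> idx_sorted [/allP idx_lt iso]; rewrite size_delete in idx_lt.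
have bump_lt k : k \in idx -> bump t k < n by move/idx_lt; rewrite /bump; lia.
split; first by apply: homo_sorted idx_sorted => k l; rewrite /bump; lia.
split; first by apply/allP=> _ /mapP[k /bump_lt kp ->].
have def_q : map (nth 0 q) idx = map (relabel y) (map P (map (bump t) idx)).
  by rewrite -!map_comp; apply/eq_in_map => k /idx_lt; apply: nth_delete.
apply/(order_iso_map (f := relabel y)); last by rewrite -def_q.
move=> _ _ /mapP[_ /mapP[k kin ->] ->] /mapP[_ /mapP[l lin ->] ->].
by apply: relabel_mono; rewrite inE nth_neq_at ?bump_lt // eq_sym neq_bump.
Qed.

Lemma occurrence_delete_avoid pat idx : occurrence p pat idx -> t \notin idx ->
  occurrence q pat (map (unbump t) idx).
Proof.
case=> idx_sorted [/allP idx_lt iso] tNidx.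
have idx_t k : k \in idx -> k != t by apply: contraTneq => ->.
split.
  apply: (homo_sorted_in (P := [pred k | k != t])) idx_sorted; last first.
    by apply/allP=> k /idx_t.
  by move=> k l /eqP ? /eqP ?; rewrite /unbump; lia.
split.
  apply/allP=> _ /mapP[k kin ->]; rewrite size_delete.
  by have := idx_lt k kin; move: (idx_t k kin); rewrite /unbump => /eqP; lia.
have def_q : map (nth 0 q) (map (unbump t) idx) = map (relabel y) (map P idx).
  rewrite -!map_comp; apply/eq_in_map => k kin /=.
  by rewrite nth_delete_unbump ?idx_lt ?idx_t.
rewrite def_q order_iso_map // => _ _ /mapP[k kin ->] /mapP[l lin ->].
by apply: relabel_mono; rewrite inE nth_neq_at ?idx_lt ?idx_t.
Qed.

Lemma contains_delete pat : contains q pat -> contains p pat.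
Proof. by case=> idx /occurrence_delete; exists (map (bump t) idx). Qed.

Lemma serves_at_delete pat r k : r \in pat ->
  serves_at q pat r k -> serves_at p pat r (bump t k).
Proof.
move=> rpat [idx [occ <-]]; exists (map (bump t) idx).
by rewrite (nth_map 0) ?(size_occurrence occ) ?index_mem //; split=> //; apply: occurrence_delete.
Qed.

Lemma serves_as_delete pat r x : r \in pat -> x != y ->
  serves_as q pat r (relabel y x) -> serves_as p pat r x.
Proof.
move=> rpat xy [k [kr ek]]; exists (bump t k); split; first exact: serves_at_delete.
have kq := serves_at_lt rpat kr; rewrite size_delete in kq.
have bk : bump t k < n by rewrite /bump; lia.
move: ek; rewrite nth_delete // => /relabel_inj; apply; rewrite // inE.
by rewrite nth_neq_at // eq_sym neq_bump.
Qed.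

Lemma blue_delete x : x != y -> blue q (relabel y x) -> blue p x.
Proof. by move=> xy [] /serves_as_delete sx; [left | right]; apply: sx. Qed.

Lemma serves_at_delete_avoid pat r idx : r \in pat -> occurrence p pat idx -> t \notin idx ->
  serves_at q pat r (unbump t (nth 0 idx (index r pat))).
Proof.
move=> rpat occ tNidx; exists (map (unbump t) idx); split; first exact: occurrence_delete_avoid.
by rewrite (nth_map 0) // (size_occurrence occ) index_mem.
Qed.

Lemma serves_as_delete_avoid pat r idx : r \in pat -> occurrence p pat idx -> t \notin idx ->
  serves_as q pat r (relabel y (P (nth 0 idx (index r pat)))).
Proof.
move=> rpat occ tNidx; have kidx : nth 0 idx (index r pat) \in idx.
  by rewrite mem_nth // (size_occurrence occ) index_mem.
exists (unbump t (nth 0 idx (index r pat))); split; first exact: serves_at_delete_avoid.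
case: occ => _ [/allP idx_lt _]; rewrite nth_delete_unbump ?idx_lt //.
by apply: contraTneq kidx => ->.
Qed.

Lemma serves_at321_1_delete_avoid i j k : i < j -> j < k -> k < n -> t \notin [:: i; j; k] ->
  P k < P j -> P j < P i -> serves_at q [:: 3; 2; 1] 1 (unbump t k).
Proof.
move=> ij jk kp tN kj ji; apply: (serves_at_delete_avoid (idx := [:: i; j; k])) => //.
by apply/occurrence3P; split=> //; apply/order_iso321P.
Qed.

Lemma serves_as321_2_delete_avoid i j k : i < j -> j < k -> k < n -> t \notin [:: i; j; k] ->
  P k < P j -> P j < P i -> serves_as q [:: 3; 2; 1] 2 (relabel y (P j)).
Proof.
move=> ij jk kp tN kj ji; apply: (serves_as_delete_avoid (idx := [:: i; j; k])) => //.
by apply/occurrence3P; split=> //; apply/order_iso321P.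
Qed.

Lemma serves_as4312_2_delete_avoid i j k l : i < j -> j < k -> k < l -> l < n ->
  t \notin [:: i; j; k; l] -> P k < P l -> P l < P j -> P j < P i ->
  serves_as q [:: 4; 3; 1; 2] 2 (relabel y (P l)).
Proof.
move=> ij jk kl lp tN kl' lj ji; apply: (serves_as_delete_avoid (idx := [:: i; j; k; l])) => //.
by apply/occurrence4P; split=> //; apply/order_iso4312P.
Qed.

End DeletionAtPosition.

Section Permutation.

Variable p : seq nat.
Hypothesis p_perm : is_perm p.
Local Notation P := (nth 0 p).
Local Notation n := (size p).

Lemma is_perm_uniq : uniq p.
Proof. by rewrite (perm_uniq p_perm) iota_uniq. Qed.

Lemma mem_is_perm x : (x \in p) = (1 <= x <= n).
Proof. by rewrite (perm_mem p_perm) mem_iota; lia. Qed.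

Lemma nth_is_perm k : k < n -> 1 <= P k <= n.
Proof. by move=> kp; rewrite -mem_is_perm mem_nth. Qed.

Lemma nth_is_perm_inj k l : k < n -> l < n -> P k = P l -> k = l.
Proof. by move=> kp lp e; apply/eqP; rewrite -(nth_uniq 0 kp lp is_perm_uniq) e. Qed.

Lemma nth_is_perm_onto v : 1 <= v <= n -> exists2 k, k < n & P k = v.
Proof.
by rewrite -mem_is_perm => vp; exists (index v p); rewrite ?index_mem ?nth_index.
Qed.

Lemma perm_prefixP k : k <= n ->
  perm_eq (take k p) (iota 1 k) <-> forall m, m < k -> P m <= k.
Proof.
move=> kp; split=> [pre m mk | bounded].
  have : P m \in iota 1 k.
    by rewrite -(perm_mem pre) -(nth_take 0 mk) mem_nth // size_takel.
  by rewrite mem_iota; lia.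
have sub : {subset take k p <= iota 1 k}.
  move=> x /(nthP 0)[m]; rewrite size_takel // => mk <-; rewrite nth_take ?mem_iota //.
  rewrite add1n ltnS bounded // andbT.
  by case/andP: (nth_is_perm (leq_trans mk kp)).
have size_pre : size (iota 1 k) <= size (take k p) by rewrite size_iota size_takel.
have [_ eq_pre] := uniq_min_size (take_uniq k is_perm_uniq) sub size_pre.
by apply: uniq_perm; rewrite ?take_uniq ?iota_uniq ?is_perm_uniq.
Qed.

Lemma is_perm_delete y : y \in p -> is_perm (delete p y).
Proof.
move=> yp; have size_q : size (delete p y) = n.-1.
  by rewrite -(nth_index 0 yp) size_delete ?index_mem ?is_perm_uniq.
apply: uniq_perm; [|exact: iota_uniq|].
  rewrite map_inj_in_uniq ?filter_uniq ?is_perm_uniq // => x z.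
  by rewrite !mem_filter => /andP[xy _] /andP[zy _]; apply: relabel_inj.
move=> x; move: (yp); rewrite size_q mem_iota mem_is_perm => y_range.
apply/mapP/idP=> [[z] | x_range].
  by rewrite mem_filter mem_is_perm => /andP[/eqP ? ?] ->; rewrite /relabel; case: ifP; lia.
have [xy | yx] := ltnP x y.
  exists x; last by rewrite /relabel; case: ifP; lia.
  by rewrite mem_filter mem_is_perm; apply/andP; split; [apply/eqP|]; lia.
exists x.+1; last by rewrite /relabel; case: ifP; lia.
by rewrite mem_filter mem_is_perm; apply/andP; split; [apply/eqP|]; lia.
Qed.

Lemma indecomposable_gt k : indecomposable p -> 1 <= k < n -> exists2 m, m < k & k < P m.
Proof.
case=> _ indec kn; have [/hasP[m] | /hasPn bounded] := boolP (has (fun m => k < P m) (iota 0 k)).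
  by rewrite mem_iota => mk; exists m => //; lia.
case: (indec k kn); apply/perm_prefixP; first lia.
by move=> m mk; rewrite leqNgt; apply: bounded; rewrite mem_iota; lia.
Qed.

End Permutation.

Section PermutationDeletion.

Variables (p : seq nat) (t : nat).
Hypotheses (p_perm : is_perm p) (t_lt : t < size p).
Local Notation P := (nth 0 p).
Local Notation n := (size p).
Local Notation y := (nth 0 p t).
Local Notation q := (delete p (nth 0 p t)).

Let p_uniq := is_perm_uniq p_perm.

Lemma is_perm_delete_at : is_perm q.
Proof. exact/is_perm_delete/mem_nth. Qed.

Section Indecomposable.

Hypothesis p_indec : indecomposable p.
Variables (t' c : nat).
Hypotheses (t'_ge : t.-1 <= t') (t'_lt : t' < n) (t'_below : P t' < y).

Lemma delete_prefix_unbounded_before k : 1 <= k -> k < t ->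
  ~ (forall m, m < k -> nth 0 q m <= k).
Proof.
(* The first k entries of p would be {1..k+1} minus y, hence contain P t', yet t' >= k. *)
move=> k_pos kt bounded; have kp : k <= n by lia.
have q_le m : m < k -> relabel y (P m) <= k.
  move=> mk; have := bounded m mk; rewrite nth_delete //; last lia.
  by rewrite /bump (leqNgt t m) (ltn_trans mk kt) add0n.
have [m0 m0k m0_big] := indecomposable_gt p_perm p_indec (k := k) (ltac:(lia)).
have yk : y <= k by move: (q_le m0 m0k); rewrite /relabel; case: ifP; lia.
pose S := rem y (iota 1 k.+1).
have memS x : (x \in S) = (x != y) && (1 <= x <= k.+1).
  by rewrite (mem_rem_uniq _ (iota_uniq _ _)) inE mem_iota; congr (_ && _); lia.
have sub : {subset take k p <= S}.
  move=> x /(nthP 0)[m]; rewrite size_takel // => mk <-.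
  rewrite nth_take // memS; change ((P m != y) && (1 <= P m <= k.+1)).
  rewrite nth_neq_at //=; [|lia | apply/eqP; lia].
  by have := q_le m mk; have := nth_is_perm p_perm (k := m); rewrite /relabel; case: ifP; lia.
have size_S : size S <= size (take k p).
  by rewrite size_rem ?size_iota ?size_takel // mem_iota; lia.
have [_ eq_take] := uniq_min_size (take_uniq k p_uniq) sub size_S.
have : P t' \in take k p.
  rewrite eq_take memS (ltn_eqF t'_below) /=.
  by have := nth_is_perm p_perm t'_lt; lia.
by rewrite in_take ?mem_nth // index_uniq //; lia.
Qed.

Hypotheses (t'_neq : t' != t) (c_lt : c < t) (c_above : y < P c).

Lemma indecomposable_delete : indecomposable q.
Proof.
have q_perm := is_perm_delete_at.
split; first by rewrite size_delete //; move/eqP: t'_neq; lia.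
move=> k; rewrite size_delete // => kq.
have kq' : k <= size q by rewrite size_delete //; lia.
move=> /(perm_prefixP q_perm kq') bounded; case: (ltnP k t) => [kt | tk].
  by apply: (delete_prefix_unbounded_before _ kt bounded); lia.
have big m : m <= k -> m != t -> k.+1 < P m -> False.
  move=> mk mt km.
  have mq : unbump t m < k by move: mt; rewrite /unbump => /eqP; lia.
  have := bounded _ mq; rewrite nth_delete_unbump //; last lia.
  by rewrite /relabel; case: ifP; lia.
case: (leqP y k.+1) => yk.
  have [m mk km] := indecomposable_gt p_perm p_indec (k := k.+1) (ltac:(lia)).
  apply: (big m _ _ km); first lia.
  by apply: contraTneq km => ->; lia.
by apply: (big c); [lia | apply/eqP; lia | lia].
Qed.

End Indecomposable.

Lemma avoider_delete t' c : indecomposable p ->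
  ~ contains p [:: 3; 2; 4; 1] -> ~ contains p [:: 4; 3; 2; 1] ->
  t.-1 <= t' -> t' < n -> P t' < y -> t' != t -> c < t -> y < P c -> avoider q.
Proof.
move=> p_indec no3241 no4321 t'_ge t'_lt t'_below t't c_lt c_above; split.
- exact: is_perm_delete_at.
- exact: (indecomposable_delete p_indec t'_ge t'_lt t'_below t't c_lt c_above).
- by move/(contains_delete p_uniq t_lt).
- by move/(contains_delete p_uniq t_lt).
Qed.

Section Blue.

Variable t' : nat.
Hypotheses (t'_adj : (t' = t.-1 /\ 0 < t) \/ t' = t.+1) (t'_lt : t' < n) (t'_below : P t' < y).
Hypothesis no321_far : forall u v w, u < v -> v < w -> w < n -> t.+2 <= w ->
  P w < P v -> P v < P u -> False.

(* A witness using position t as its smallest letter is moved to t'; a witness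
   using t as another letter would give a 321 ending at position t+2 or later. *)

Lemma blue321_delete s : P s != y -> serves_at p [:: 3; 2; 1] 2 s ->
  serves_as q [:: 3; 2; 1] 2 (relabel y (P s)).
Proof.
move=> sy /serves_at321_2P[e [k [es sk kp ks se]]].
have st : s != t by apply: contraNneq sy => ->.
have [et | et] := eqVneq e t; first by rewrite et in es se; case: (no321_far es sk kp _ ks se); lia.
have [kt | kt] := eqVneq k t; last first.
  by apply: (serves_as321_2_delete_avoid p_uniq t_lt es sk kp) => //; rewrite !inE; lia.
rewrite kt in sk ks; have st' : s < t'.
  have : s != t' by apply: contraTneq ks => ->; rewrite -leqNgt ltnW.
  by case: t'_adj => [[-> _] | ->] /eqP; lia.
by apply: (serves_as321_2_delete_avoid p_uniq t_lt es st') => //; rewrite ?inE; lia.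
Qed.

Lemma blue4312_delete s : P s != y -> serves_at p [:: 4; 3; 1; 2] 2 s ->
  serves_as q [:: 4; 3; 1; 2] 2 (relabel y (P s)).
Proof.
move=> sy /serves_at4312_2P[e [f [g [ef fg [gs sp] gs' [sf fe]]]]].
have st : s != t by apply: contraNneq sy => ->.
have [et | et] := eqVneq e t; first by rewrite et in ef fe; case: (no321_far ef fg _ _ _ fe); lia.
have [ft | ft] := eqVneq f t.
  by rewrite ft in ef fg sf fe; case: (no321_far ef (ltn_trans fg gs) sp _ sf fe); lia.
have [gt | gt] := eqVneq g t; last first.
  by apply: (serves_as4312_2_delete_avoid p_uniq t_lt ef fg gs sp) => //; rewrite !inE; lia.
rewrite gt in fg gs gs'; have [ft' t's] : f < t' /\ t' < s.
  have : f != t' by apply: contraTneq sf => ->; rewrite -leqNgt ltnW // (ltn_trans t'_below).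
  have : s != t' by apply: contraTneq gs' => ->; rewrite -leqNgt ltnW.
  by case: t'_adj => [[-> _] | ->] /eqP ? /eqP ?; lia.
apply: (serves_as4312_2_delete_avoid p_uniq t_lt ef ft' t's sp) => //; first by rewrite !inE; lia.
exact: ltn_trans t'_below gs'.
Qed.

Lemma blue_delete_iff x : x != y -> blue p x <-> blue q (relabel y x).
Proof.
move=> xy; split; last exact: blue_delete.
case=> [[s [ss sx]] | [s [ss sx]]]; rewrite -sx in xy *.
  by left; apply: blue321_delete.
by right; apply: blue4312_delete.
Qed.

End Blue.

End PermutationDeletion.

Lemma serves_at_contains p pat r k : serves_at p pat r k -> contains p pat.
Proof. by case=> idx [occ _]; exists idx. Qed.

Lemma ex_rightmost (R : nat -> Prop) N : (exists m, m < N /\ R m) ->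
  exists m, [/\ m < N, R m & forall k, m < k < N -> ~ R k].
Proof.
elim: N => [|N IH] [m [mN Rm]] //; have [RN | RNn] := classic (R N).
  by exists N; split=> // k; lia.
have mN' : m < N by rewrite ltn_neqAle -ltnS mN andbT; apply/eqP=> mE; rewrite mE in Rm.
have [|m' [m'N Rm' right]] := IH; first by exists m.
exists m'; split=> // [|k /andP[m'k kN]]; first lia.
by case: (ltngtP k N) => [kN' | | ->] //; [apply: right; lia | lia].
Qed.

Lemma ex_leftmost (R : nat -> Prop) lo N : (exists m, lo < m < N /\ R m) ->
  exists m, [/\ lo < m < N, R m & forall k, lo < k < m -> ~ R k].
Proof.
elim: N => [|N IH] [m [mN Rm]]; first lia.
have [inN | notinN] := classic (exists m, lo < m < N /\ R m).
  by have [m' [m'N Rm' left]] := IH inN; exists m'; split=> //; lia.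
have mE : m = N.
  case: (ltngtP m N) => // mN'; [case: notinN; exists m; split=> //; lia | lia].
by rewrite mE in Rm mN; exists N; split=> // k kN Rk; apply: notinN; exists k; split=> //; lia.
Qed.

Lemma ex_last_one_pos q : contains q [:: 3; 2; 1] -> exists i, last_one_pos q i.
Proof.
case/contains321P=> i [j [k [ij jk kq kj ji]]].
have [|m [_ last later]] := @ex_rightmost (serves_at q [:: 3; 2; 1] 1) (size q).
  by exists k; split=> //; apply/serves_at321_1P; exists i, j.
exists m; split=> // l ml ls; apply: (later l) => //.
by rewrite ml (serves_at_lt _ ls).
Qed.

Lemma ex_rightmost_greater_pos q i : (exists m, m < i /\ nth 0 q i < nth 0 q m) ->
  exists j, rightmost_greater_pos q i j.
Proof. by move/ex_rightmost=> [j [ji ij right]]; exists j. Qed.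

Lemma ex_first_nonLRMax_after q i : (exists m, i < m < size q /\ ~ is_LRMax q m) ->
  exists k, first_nonLRMax_after q i k.
Proof.
move/ex_leftmost=> [k [ikq nonmax left]]; exists k; split=> //; split=> // m im.
exact: NNPP (left m im).
Qed.

Lemma last_one_rightmost_greater q i : last_one_pos q i -> exists j, rightmost_greater_pos q i j.
Proof.
by case=> /serves_at321_1P[u [v [_ vi _ iv _]]] _; apply: ex_rightmost_greater_pos; exists v.
Qed.

Section PeakBlue.

Variables (p : seq nat) (i : nat).
Hypotheses (p_perm : is_perm p) (i_last : last_one_pos p i).
Hypotheses (no3241 : ~ contains p [:: 3; 2; 4; 1]) (no4321 : ~ contains p [:: 4; 3; 2; 1]).
Local Notation P := (nth 0 p).
Local Notation n := (size p).

Lemma last321_witness : exists u v, [/\ u < v, v < i, i < n, P i < P v & P v < P u].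
Proof. by case: i_last => /serves_at321_1P. Qed.

Lemma no321_after u v j : u < v -> v < j -> j < n -> i < j -> P j < P v -> P v < P u -> False.
Proof.
move=> uv vj jn ij jv vu; case: i_last => _ /(_ j ij); apply; apply/serves_at321_1P.
by exists u, v.
Qed.

Lemma no3241_at a b c d : a < b -> b < c -> c < d -> d < n ->
  P d < P b -> P b < P a -> P a < P c -> False.
Proof. by move=> *; apply: no3241; apply/contains3241P; exists a, b, c, d. Qed.

Lemma no4321_at a b c d : a < b -> b < c -> c < d -> d < n ->
  P d < P c -> P c < P b -> P b < P a -> False.
Proof. by move=> *; apply: no4321; apply/contains4321P; exists a, b, c, d. Qed.

Lemma last_one_range : 1 < i < n.
Proof. by have [u [v [uv vi ip _ _]]] := last321_witness; lia. Qed.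

Let p_uniq := is_perm_uniq p_perm.

Section RightPeak.

Local Notation q := (delete p (P i)).
Local Notation Q := (nth 0 (delete p (P i))).

Lemma nth_delete_right_before k : k < i -> Q k = relabel (P i) (P k).
Proof.
have [_ ip] := andP last_one_range.
by move=> ki; rewrite nth_delete //; [rewrite /bump (leqNgt i k) ki | lia].
Qed.

Lemma nth_delete_right_lt k l : k < i -> l < i -> (Q k < Q l) = (P k < P l).
Proof.
have [_ ip] := andP last_one_range.
have neq_i m : m < i -> P m \in predC1 (P i).
  by move=> mi; rewrite inE (nth_neq_at p_uniq ip) //; [lia | apply/eqP; lia].
by move=> ki li; rewrite !nth_delete_right_before // relabel_mono // neq_i.
Qed.

Hypothesis below : P i.-1 < P i.

Lemma last_one_delete_right : last_one_pos q i.-1.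
Proof.
have [u [v [uv vi ip iv vu]]] := last321_witness; have i_rng := last_one_range.
have vi1 : v < i.-1.
  have : v != i.-1 by apply: contraTneq iv => ->; rewrite -leqNgt ltnW.
  by move/eqP; lia.
split.
  have -> : i.-1 = unbump i i.-1 by rewrite /unbump; lia.
  apply: (serves_at321_1_delete_avoid p_uniq ip uv vi1) => //; first lia.
    by rewrite !inE; lia.
  exact: ltn_trans below iv.
move=> j ij /(serves_at_delete p_uniq ip (isT : 1 \in [:: 3; 2; 1])).
by case: i_last => _ /(_ (bump i j)); apply; rewrite /bump; lia.
Qed.

Lemma peak_insertion_right : in_peak_insertion_set q (P i).
Proof.
have [u [v [uv vi ip iv vu]]] := last321_witness; have i_rng := last_one_range.
have last_q := last_one_delete_right.
left; split; first exact: serves_at_contains (proj1 last_q).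
have [j [ji1 [gt right]]] := last_one_rightmost_greater last_q.
exists i.-1, j; split=> //; split=> //; left.
rewrite nth_delete_right_lt in gt; try lia.
have vi1 : v < i.-1.
  have : v != i.-1 by apply: contraTneq iv => ->; rewrite -leqNgt ltnW.
  by move/eqP; lia.
have vj : v <= j.
  rewrite leqNgt; apply/negP=> jv; apply: (right v); first lia.
  by rewrite nth_delete_right_lt; lia.
have above : P i < P j.
  have : P j != P i by rewrite nth_neq_at //; [lia | apply/eqP; lia].
  rewrite neq_ltn => /orP[] // j_below.
  have vj' : v < j.
    by rewrite ltn_neqAle vj andbT; apply: contraTneq j_below => <-; rewrite -leqNgt ltnW.
  by case: (no4321_at uv vj' ji1 (ltac:(lia)) gt (ltn_trans j_below iv) vu).
rewrite !nth_delete_right_before; try lia.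
by rewrite /relabel; case: ifP; case: ifP; lia.
Qed.

End RightPeak.

Section LeftPeak.

Local Notation y := (P i.-1).
Local Notation q := (delete p (P i.-1)).
Local Notation Q := (nth 0 (delete p (P i.-1))).

Let i1_lt : i.-1 < n.
Proof. by have := last_one_range; lia. Qed.

Lemma nth_delete_left_before k : k < i.-1 -> Q k = relabel y (P k).
Proof. by move=> ki; rewrite nth_delete //; [rewrite /bump (leqNgt i.-1 k) ki | lia]. Qed.

Lemma last_one_delete_left j : last_one_pos q j -> j <= i.-1.
Proof.
case=> /(serves_at_delete p_uniq i1_lt (isT : 1 \in [:: 3; 2; 1])) lifted _.
rewrite leqNgt; apply/negP=> ij; case: i_last => _ /(_ _ _ lifted); apply.
by rewrite /bump; lia.
Qed.

Hypothesis below : P i < P i.-1.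

Lemma left_peak_above : exists2 c, c < i.-1 & y < P c.
Proof.
have [u [v [uv vi ip iv vu]]] := last321_witness; have i_rng := last_one_range.
exists u; first by lia.
have : P u != y by rewrite nth_neq_at //; [lia | apply/eqP; lia].
rewrite neq_ltn => /orP[] // u_below.
have vi1 : v < i.-1.
  have : v != i.-1 by apply: contraTneq u_below => <-; rewrite -leqNgt ltnW.
  by move/eqP; lia.
have i1i : i.-1 < i by lia.
by case: (no3241_at uv vi1 i1i ip iv vu u_below).
Qed.

Lemma nth_delete_left_at : Q i.-1 = P i.
Proof.
have i_rng := last_one_range.
rewrite nth_delete //; last lia.
rewrite /bump leqnn add1n prednK; last lia.
by rewrite /relabel ltnNge (ltnW below).
Qed.

Lemma delete_left_insertion_at : last_one_pos q i.-1 ->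
  exists j, rightmost_greater_pos q i.-1 j /\ (Q i.-1).+1 <= y <= (Q j).+1.
Proof.
move=> /last_one_rightmost_greater[j [ji1 [gt right]]]; exists j; split=> //.
have i_rng := last_one_range; have [c c_lt c_above] := left_peak_above.
have i1i : i.-1 < i by lia.
rewrite nth_delete_left_at in gt right *; rewrite nth_delete_left_before // in gt *.
rewrite below /= /relabel; case: ltnP => [| j_le]; first lia.
move: gt; rewrite /relabel (ltnNge y (P j)) j_le /= => gt; rewrite leqNgt; apply/negP=> far.
(* The entry (P j).+1 would complete a 3241, lie strictly between positions j and
   i-1, or be the "1" of a 321 right of a. *)
have [|m m_lt Pm] := nth_is_perm_onto p_perm (v := (P j).+1).
  by have := nth_is_perm p_perm i1_lt; lia.
case: (ltngtP m j) => [m_j | j_m | mj]; last by move: Pm; rewrite mj; lia.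
  by case: (no3241_at m_j ji1 i1i (ltac:(lia) : i < n) gt (ltac:(lia)) (ltac:(lia))).
case: (ltngtP m i.-1) => [m_i1 | i1_m | mi1]; last by move: Pm; rewrite mi1; lia.
  apply: (right m); first lia.
  by rewrite nth_delete_left_before // /relabel Pm (ltnNge y) (ltnW far) /=; lia.
case: (ltngtP m i) => [| i_m | mi]; [lia | | by move: Pm; rewrite mi; lia].
by case: (no321_after c_lt (ltac:(lia) : i.-1 < m) m_lt i_m (ltac:(lia)) c_above).
Qed.

Lemma delete_left_insertion_before j : j < i.-1 ->
  exists k, first_nonLRMax_after q j k /\ (Q k).+1 <= y <= size q.
Proof.
move=> j_lt; have i_rng := last_one_range; have [c c_lt c_above] := left_peak_above.
have size_q : size q = n.-1 by rewrite size_delete.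
have i1_nonmax : ~ is_LRMax q i.-1.
  move/(_ c c_lt); rewrite nth_delete_left_at nth_delete_left_before // /relabel c_above; lia.
have [k [jkq [k_nonmax left]]] : exists k, first_nonLRMax_after q j k.
  by apply: ex_first_nonLRMax_after; exists i.-1; split=> //; rewrite size_q; lia.
have k_le : k <= i.-1 by rewrite leqNgt; apply/negP=> i1k; apply: i1_nonmax; apply: left; lia.
exists k; split=> //; rewrite size_q; apply/andP; split; last first.
  by have := nth_is_perm p_perm (k := c) (ltac:(lia)); lia.
case: (ltngtP k i.-1) => [k_i1 | | ->]; [| lia | by rewrite nth_delete_left_at].
have : P k != y by apply: nth_neq_at => //; [lia | apply/eqP; lia].
rewrite nth_delete_left_before // neq_ltn => /orP[k_below | k_above].
  by rewrite /relabel (ltnNge y (P k)) (ltnW k_below).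
case: k_nonmax => m mk; rewrite !nth_delete_left_before; try lia.
have : P m != P k by apply: (nth_neq_at p_uniq); [lia | lia | apply/eqP; lia].
rewrite neq_ltn => /orP[m_below | m_above].
  by rewrite relabel_mono // inE; apply: nth_neq_at; lia.
have i1i : i.-1 < i by lia.
by case: (no4321_at mk k_i1 i1i (ltac:(lia) : i < n) below k_above m_above).
Qed.

Lemma peak_insertion_left : in_peak_insertion_set q y.
Proof.
have [q321 | q321_free] := classic (contains q [:: 3; 2; 1]); last first.
  right; split=> //; rewrite size_delete //; have [c c_lt c_above] := left_peak_above.
  have [_ ip] := andP last_one_range.
  by have := nth_is_perm p_perm (ltn_trans c_lt i1_lt); have := nth_is_perm p_perm ip; lia.
left; split=> //; have [j last_j] := ex_last_one_pos q321.
have j_le := last_one_delete_left last_j.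
case: (ltngtP j i.-1) => [j_lt | i1j | j_eq]; last 1 first.
- rewrite j_eq in last_j; have [k [rg bound]] := delete_left_insertion_at last_j.
  by exists i.-1, k; do !split=> //; left.
- have [k rg] := last_one_rightmost_greater last_j.
  by exists j, k; do !split=> //; right; apply: delete_left_insertion_before.
- lia.
Qed.

End LeftPeak.

Hypothesis p_indec : indecomposable p.

Lemma peak_right_delete : P i.-1 < P i ->
  [/\ avoider (delete p (P i)),
      forall x, x != P i -> (blue p x <-> blue (delete p (P i)) (relabel (P i) x))
    & in_peak_insertion_set (delete p (P i)) (P i)].
Proof.
move=> below; have [u [v [uv vi ip iv vu]]] := last321_witness; have i_rng := last_one_range.
have i1_neq : i.-1 != i by apply/eqP; lia.
split; last exact: peak_insertion_right.
  by apply: (avoider_delete p_perm ip (t' := i.-1) (c := u)) => //; lia.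
apply: (blue_delete_iff p_perm ip (t' := i.-1)); [by left; split; lia | lia | done |].
by move=> a b w ab bw wn iw; apply: no321_after ab bw wn _; lia.
Qed.

Lemma peak_left_delete : P i < P i.-1 ->
  [/\ avoider (delete p (P i.-1)),
      forall x, x != P i.-1 -> (blue p x <-> blue (delete p (P i.-1)) (relabel (P i.-1) x))
    & in_peak_insertion_set (delete p (P i.-1)) (P i.-1)].
Proof.
move=> above; have i_rng := last_one_range; have [c c_lt c_above] := left_peak_above above.
have i1_lt : i.-1 < n by lia.
have i_neq : i != i.-1 by apply/eqP; lia.
split; last exact: peak_insertion_left.
  by apply: (avoider_delete p_perm i1_lt (t' := i) (c := c)) => //; lia.
apply: (blue_delete_iff p_perm i1_lt (t' := i)); [by right; lia | lia | done |].
by move=> a b w ab bw wn iw; apply: no321_after ab bw wn _; lia.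
Qed.

End PeakBlue.

Theorem proposition6 (p : seq nat) (y : nat) :
  avoider p -> contains p [:: 3; 2; 1] -> peak_blue p y ->
  [/\ avoider (delete p y),
      (forall x, x \in p -> x != y ->
         (blue p x <-> blue (delete p y) (relabel y x)))
    & in_peak_insertion_set (delete p y) y].
Proof.
(* The 321-containment hypothesis is implied by [peak_blue p y]. *)
move=> p_avoid _ [i [i_last ->]]; case: (p_avoid) => p_perm p_indec no3241 no4321.
have i_rng := last_one_range i_last.
have [below | above | eq] := ltngtP (nth 0 p i.-1) (nth 0 p i).
- have [? blue ?] := peak_right_delete p_perm i_last no3241 no4321 p_indec below.
  by split=> // x _; apply: blue.
- have [? blue ?] := peak_left_delete p_perm i_last no3241 no4321 p_indec above.
  by split=> // x _; apply: blue.
- by have := nth_is_perm_inj p_perm (ltac:(lia) : i.-1 < size p) (proj2 (andP i_rng)) eq; lia.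
Qed.
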